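(* Let $b\ge 1$ be an integer and let $a_1<a_2<\dots<a_l$ be integers with $l\ge 2$ such that $a_{i+1}-a_i\le b$ for all $1\le i<l$. Set $A=\{a_1,\dots,a_l\}$. Then for every integer $n>2b^2$, \[ nA=\bigcup_{1\le k<l}\Big((n-2b^2)\{a_k,a_{k+1}\}+2b^2A\Big). \]
   Context: For a subset $A$ of an abelian group and a positive integer $n$, $nA=A+A+\dots+A$ ($n$ summands) denotes the $n$-fold sumset $\{c_1+\dots+c_n : c_i\in A\}$ (repetitions allowed); sums of sets are Minkowski sums $X+Y=\{x+y: x\in X, y\in Y\}$. *)

From Stdlib Require Import ZArith.
Open Scope Z_scope.

Definition zset := Z -> Prop.

Definition sumset (X Y : zset) : zset :=
  fun z => exists x y, X x /\ Y y /\ z = x + y.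

Fixpoint nfold (n : nat) (A : zset) : zset :=
  match n with
  | O => fun z => z = 0
  | S O => A
  | S m => sumset (nfold m A) A
  end.

(* The set {a_0, ..., a_(l-1)} of a finite sequence a indexed by 0..l-1 *)
Definition setOf (l : nat) (a : nat -> Z) : zset :=
  fun z => exists i, (i < l)%nat /\ z = a i.

Definition pair2 (x y : Z) : zset := fun z => z = x \/ z = y.

From Stdlib Require Import ZArith Lia List Permutation Classical.
Import ListNotations.
Open Scope Z_scope.

(* Write an element of nA as a sum of a_i over a multiset js of n indices.  If
   more than b(b-1) indices lie strictly below some m and more than b(b-1)
   strictly above it, the pigeonhole principle yields a gap v <= b such that at
   least b indices i < m have a_(i+1) - a_i = v, and a gap w <= b such that at
   least b indices j > m have a_j - a_(j-1) = w.  Moving w of the former one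
   step up and v of the latter one step down keeps the sum (w v - v w = 0) and
   strictly lowers the sum of squares, since every moved summand approaches a_m.
   A representation minimising the sum of squares therefore has, for every m,
   at most b(b-1) indices on one side of m; sweeping m upwards gives a k with at
   most b(b-1) indices below k and at most b(b-1) above k+1, so all but
   2b(b-1) <= 2b^2 summands lie in {a_k, a_(k+1)}. *)

Fixpoint zsum (xs : list Z) : Z :=
  match xs with
  | [] => 0
  | x :: xs => x + zsum xs
  end.

Lemma zsum_app xs ys : zsum (xs ++ ys) = zsum xs + zsum ys.
Proof. induction xs as [|x xs IH]; cbn; lia. Qed.

Lemma zsum_perm xs ys : Permutation xs ys -> zsum xs = zsum ys.
Proof. induction 1; cbn in *; lia. Qed.

Lemma zsum_map_shift {X : Type} (f g : X -> Z) (c : Z) (l : list X) :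
  Forall (fun x => f x = g x + c) l ->
  zsum (map f l) = zsum (map g l) + Z.of_nat (length l) * c.
Proof.
  induction 1; cbn [map zsum length] in *; [lia|].
  rewrite Nat2Z.inj_succ, Z.mul_succ_l. lia.
Qed.

Lemma zsum_map_shift_le {X : Type} (f g : X -> Z) (c : Z) (l : list X) :
  Forall (fun x => f x <= g x + c) l ->
  zsum (map f l) <= zsum (map g l) + Z.of_nat (length l) * c.
Proof.
  induction 1; cbn [map zsum length] in *; [lia|].
  rewrite Nat2Z.inj_succ, Z.mul_succ_l. lia.
Qed.

Lemma nfold_iff_zsum (X : zset) (n : nat) (z : Z) :
  nfold n X z <-> exists xs, length xs = n /\ Forall X xs /\ z = zsum xs.
Proof.
  revert z; induction n as [|[|n] IH]; intros z.
  - split.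
    + intros ->. exists []. auto.
    + intros [[|x xs] [Hlen [_ ->]]]; [reflexivity|discriminate].
  - split.
    + intros Hz. exists [z]. cbn. repeat split; auto. lia.
    + intros [[|x [|y xs]] [Hlen [HX ->]]]; try discriminate.
      inversion HX; subst. cbn. now rewrite Z.add_0_r.
  - change (nfold (S (S n)) X z) with (sumset (nfold (S n) X) X z). split.
    + intros [x [y [Hx [Hy ->]]]]. apply IH in Hx as [xs [Hlen [HX ->]]].
      exists (y :: xs). cbn. repeat split; auto. lia.
    + intros [[|y xs] [Hlen [HX ->]]]; try discriminate. inversion HX; subst.
      exists (zsum xs), y. repeat split; auto.
      * apply IH. exists xs. auto.
      * cbn. lia.
Qed.

Lemma nfold_mono (X Y : zset) (n : nat) (z : Z) :
  (forall x, X x -> Y x) -> nfold n X z -> nfold n Y z.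
Proof.
  intros HXY Hz. apply nfold_iff_zsum in Hz as [xs [Hlen [HX ->]]].
  apply nfold_iff_zsum. exists xs. repeat split; auto. eapply Forall_impl; eauto.
Qed.

Lemma sumset_nfold (X : zset) (m p : nat) (z : Z) :
  sumset (nfold m X) (nfold p X) z -> nfold (m + p) X z.
Proof.
  intros [x [y [Hx [Hy ->]]]].
  apply nfold_iff_zsum in Hx as [xs [Hxs [HX ->]]].
  apply nfold_iff_zsum in Hy as [ys [Hys [HY ->]]].
  apply nfold_iff_zsum. exists (xs ++ ys).
  rewrite length_app, zsum_app. repeat split; auto. now apply Forall_app.
Qed.

Lemma nfold_zsum_map (X : zset) (f : nat -> Z) (js : list nat) :
  Forall (fun i => X (f i)) js -> nfold (length js) X (zsum (map f js)).
Proof.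
  intros Hjs. apply nfold_iff_zsum. exists (map f js).
  rewrite length_map, Forall_map. auto.
Qed.

Lemma Forall_setOf_map (l : nat) (a : nat -> Z) (xs : list Z) :
  Forall (setOf l a) xs -> exists js, Forall (fun i => (i < l)%nat) js /\ xs = map a js.
Proof.
  induction 1 as [|x xs [i [Hi ->]] _ [js [Hjs ->]]]; [now exists []|].
  exists (i :: js). auto.
Qed.

Lemma filter_andb {X : Type} (f g : X -> bool) (l : list X) :
  filter g (filter f l) = filter (fun x => (f x && g x)%bool) l.
Proof. induction l as [|x l IH]; cbn; [reflexivity|]. destruct (f x); cbn; now rewrite IH. Qed.

Lemma filter_filter_length_le {X : Type} (f g : X -> bool) (l : list X) :
  (length (filter g (filter f l)) <= length (filter g l))%nat.
Proof. induction l as [|x l IH]; cbn; [lia|]. destruct (f x); cbn; destruct (g x); cbn; lia. Qed.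

Lemma Permutation_filter {X : Type} (f : X -> bool) (l l' : list X) :
  Permutation l l' -> Permutation (filter f l) (filter f l').
Proof.
  induction 1 as [| x l l' _ IH | x y l | l l' l'' _ IH1 _ IH2]; cbn.
  - constructor.
  - destruct (f x); auto.
  - destruct (f x), (f y); auto using perm_swap.
  - eauto using Permutation_trans.
Qed.

Lemma select_filter {X : Type} (f : X -> bool) (c : nat) (l : list X) :
  (c <= length (filter f l))%nat ->
  exists U R, Permutation l (U ++ R) /\ length U = c /\ Forall (fun x => f x = true) U.
Proof.
  revert c; induction l as [|x l IH]; intros c Hc; cbn in Hc.
  - exists [], []. repeat split; auto. cbn. lia.
  - destruct (f x) eqn:Hx, c as [|c]; cbn in Hc.
    + exists [], (x :: l). repeat split; auto.
    + destruct (IH c ltac:(lia)) as [U [R [HP [HU HF]]]].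
      exists (x :: U), R. repeat split; cbn; auto.
    + destruct (IH 0%nat ltac:(lia)) as [U [R [HP [HU HF]]]].
      exists U, (x :: R). repeat split; auto. now apply Permutation_cons_app.
    + destruct (IH (S c) Hc) as [U [R [HP [HU HF]]]].
      exists U, (x :: R). repeat split; auto. now apply Permutation_cons_app.
Qed.

Lemma pigeonhole_filter {X : Type} (p : X -> Z) (V c : nat) (L : list X) :
  Forall (fun x => 1 <= p x <= Z.of_nat V) L -> (V * c < length L)%nat ->
  exists v, 1 <= v <= Z.of_nat V /\ (c < length (filter (fun x => (p x =? v)%Z) L))%nat.
Proof.
  revert L; induction V as [|V IH]; intros L HL Hlen.
  - destruct L as [|x L]; [cbn in Hlen; lia|]. inversion HL; lia.
  - set (top := fun x => p x =? Z.of_nat (S V)).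
    destruct (Nat.lt_ge_cases c (length (filter top L))) as [Hc|Hc].
    { exists (Z.of_nat (S V)). split; [lia|exact Hc]. }
    destruct (IH (filter (fun x => negb (top x)) L)) as [v [Hv Hcv]].
    + apply Forall_forall. intros x [Hx Htop]%filter_In.
      rewrite Forall_forall in HL. specialize (HL x Hx).
      apply Bool.negb_true_iff, Z.eqb_neq in Htop. lia.
    + pose proof (filter_length top L). lia.
    + exists v. split; [lia|].
      pose proof (filter_filter_length_le (fun x => negb (top x)) (fun x => p x =? v) L).
      lia.
Qed.

Lemma select_disjoint_filters {X : Type} (f g : X -> bool) (c d : nat) (l : list X) :
  (forall x, f x = true -> g x = false) ->
  (c <= length (filter f l))%nat -> (d <= length (filter g l))%nat ->
  exists U D R, Permutation l (U ++ D ++ R) /\ length U = c /\ length D = d /\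
    Forall (fun x => f x = true) U /\ Forall (fun x => g x = true) D.
Proof.
  intros Hfg Hc Hd.
  destruct (select_filter f c l Hc) as [U [R1 [HP1 [HlU HU]]]].
  assert (HgU : filter g U = []).
  { clear - Hfg HU. induction HU as [|x U Hx _ IH]; cbn; [reflexivity|].
    rewrite (Hfg x Hx). exact IH. }
  destruct (select_filter g d R1) as [D [R [HP2 [HlD HD]]]].
  { apply (Permutation_filter g), Permutation_length in HP1.
    rewrite filter_app, HgU in HP1. cbn in HP1. lia. }
  exists U, D, R. repeat split; auto.
  eauto using Permutation_trans, Permutation_app_head.
Qed.

Definition nbelow (m : nat) (js : list nat) : nat := length (filter (fun i => i <? m)%nat js).
Definition nabove (m : nat) (js : list nat) : nat := length (filter (fun i => m <? i)%nat js).

Definition balanced (l B : nat) (js : list nat) : Prop :=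
  forall m, (m < l)%nat -> (nbelow m js <= B)%nat \/ (nabove m js <= B)%nat.

Lemma nbelow_0 js : nbelow 0 js = 0%nat.
Proof. now induction js. Qed.

Lemma nabove_last l js : Forall (fun i => (i < l)%nat) js -> nabove (l - 1) js = 0%nat.
Proof.
  unfold nabove. induction 1 as [|i js Hi _ IH]; cbn [filter]; [reflexivity|].
  destruct (Nat.ltb_spec (l - 1) i); [lia|exact IH].
Qed.

Lemma balanced_window l B js :
  (2 <= l)%nat -> Forall (fun i => (i < l)%nat) js -> balanced l B js ->
  exists k, (k + 1 < l)%nat /\ (nbelow k js <= B)%nat /\ (nabove (S k) js <= B)%nat.
Proof.
  intros Hl Hjs Hbal.
  assert (Hsweep : forall t, (t + 1 < l)%nat ->
    (exists k, (k + 1 < l)%nat /\ (nbelow k js <= B)%nat /\ (nabove (S k) js <= B)%nat)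
    \/ (nbelow t js <= B)%nat).
  { induction t as [|t IH]; intros Ht; [right; rewrite nbelow_0; lia|].
    destruct (IH ltac:(lia)) as [Hfound|Hbelow]; [now left|].
    destruct (le_lt_dec (nabove (S t) js) B) as [Habove|Habove].
    - left. exists t. repeat split; auto. lia.
    - destruct (Hbal (S t) ltac:(lia)); [now right|lia]. }
  destruct (Hsweep (l - 2)%nat ltac:(lia)) as [Hfound|Hbelow]; [exact Hfound|].
  exists (l - 2)%nat. repeat split; [lia|exact Hbelow|].
  replace (S (l - 2)) with (l - 1)%nat by lia. rewrite nabove_last; [lia|exact Hjs].
Qed.

Lemma length_le_window k js :
  (length js <= length (filter (fun i => orb (i =? k) (i =? S k))%nat js)
                + nbelow k js + nabove (S k) js)%nat.
Proof.
  unfold nbelow, nabove. induction js as [|i js IH]; cbn [filter length]; [lia|].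
  destruct (Nat.eqb_spec i k), (Nat.eqb_spec i (S k)), (Nat.ltb_spec i k), (Nat.ltb_spec (S k) i);
    cbn [orb length]; lia.
Qed.

Lemma sumset_nfold_window (l : nat) (a : nat -> Z) (k M : nat) (ys : list nat) :
  Forall (fun i => (i < l)%nat) ys -> (M <= length ys)%nat ->
  (nbelow k ys + nabove (S k) ys <= M)%nat ->
  sumset (nfold (length ys - M) (pair2 (a k) (a (k + 1)%nat))) (nfold M (setOf l a))
         (zsum (map a ys)).
Proof.
  intros Hys HM Hout.
  destruct (select_filter (fun i => orb (i =? k) (i =? S k))%nat (length ys - M) ys)
    as [P [Q [HPQ [HlP HP]]]]; [pose proof (length_le_window k ys); lia|].
  assert (HlQ : length Q = M)
    by (apply Permutation_length in HPQ; rewrite length_app in HPQ; lia).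
  apply (Permutation_Forall HPQ), Forall_app in Hys as [_ HQ].
  exists (zsum (map a P)), (zsum (map a Q)). repeat split.
  - rewrite <- HlP. apply nfold_zsum_map. eapply Forall_impl; [|exact HP].
    intros i [->%Nat.eqb_eq | ->%Nat.eqb_eq]%Bool.orb_true_iff; [left|right].
    + reflexivity.
    + now rewrite Nat.add_1_r.
  - rewrite <- HlQ. apply nfold_zsum_map. eapply Forall_impl; [|exact HQ].
    intros i Hi. now exists i.
  - now rewrite (zsum_perm _ _ (Permutation_map a HPQ)), map_app, zsum_app.
Qed.

Section Descent.

Variables (l b : nat) (a : nat -> Z).
Hypothesis hinc : forall i, (i + 1 < l)%nat -> a i < a (i + 1)%nat.
Hypothesis hgap : forall i, (i + 1 < l)%nat -> a (i + 1)%nat - a i <= Z.of_nat b.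

Lemma a_lt i j : (i < j < l)%nat -> a i < a j.
Proof.
  induction j as [|j IH]; intros Hij; [lia|].
  pose proof (hinc j ltac:(lia)) as Hj. rewrite Nat.add_1_r in Hj.
  destruct (Nat.eq_dec i j) as [->|]; [exact Hj|].
  specialize (IH ltac:(lia)). lia.
Qed.

Lemma a_le i j : (i <= j < l)%nat -> a i <= a j.
Proof. intros Hij. destruct (Nat.eq_dec i j) as [->|]; [lia|]. apply Z.lt_le_incl, a_lt. lia. Qed.

Definition energy (js : list nat) : Z := zsum (map (fun i => a i * a i) js).

Lemma energy_nonneg js : 0 <= energy js.
Proof. unfold energy. induction js as [|i js IH]; cbn; nia. Qed.

Lemma square_step_up m v i :
  (i < m < l)%nat -> a (S i) = a i + v -> a (S i) * a (S i) <= a i * a i + v * (2 * a m - v).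
Proof.
  intros Him Hv. pose proof (a_le (S i) m ltac:(lia)). pose proof (a_lt i (S i) ltac:(lia)).
  nia.
Qed.

Lemma square_step_down m w j :
  (m < j < l)%nat -> a (pred j) = a j - w ->
  a (pred j) * a (pred j) <= a j * a j - w * (2 * a m + w).
Proof.
  intros Hmj Hw. pose proof (a_le m (pred j) ltac:(lia)). pose proof (a_lt (pred j) j ltac:(lia)).
  nia.
Qed.

Definition up_step (m : nat) (v : Z) (i : nat) : bool :=
  andb (i <? m)%nat (a (S i) - a i =? v)%Z.

Definition down_step (m : nat) (w : Z) (j : nat) : bool :=
  andb (m <? j)%nat (a j - a (pred j) =? w)%Z.

Lemma equal_gaps_below js m :
  (m < l)%nat -> (b * (b - 1) < nbelow m js)%nat ->
  exists v, 1 <= v <= Z.of_nat b /\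
    (b <= length (filter (up_step m v) js))%nat.
Proof.
  intros Hm Hc.
  destruct (pigeonhole_filter (fun i => a (S i) - a i) b (b - 1)
              (filter (fun i => i <? m)%nat js)) as [v [Hv Hcv]]; [|exact Hc|].
  - apply Forall_forall. intros i [_ Hi%Nat.ltb_lt]%filter_In.
    pose proof (hinc i ltac:(lia)). pose proof (hgap i ltac:(lia)).
    rewrite Nat.add_1_r in *. lia.
  - exists v. split; [exact Hv|]. rewrite filter_andb in Hcv. unfold up_step. lia.
Qed.

Lemma equal_gaps_above js m :
  Forall (fun i => (i < l)%nat) js -> (b * (b - 1) < nabove m js)%nat ->
  exists w, 1 <= w <= Z.of_nat b /\
    (b <= length (filter (down_step m w) js))%nat.
Proof.
  intros Hjs Hc.
  destruct (pigeonhole_filter (fun j => a j - a (pred j)) b (b - 1)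
              (filter (fun j => m <? j)%nat js)) as [w [Hw Hcw]]; [|exact Hc|].
  - apply Forall_forall. intros [|j] [Hj Hmj%Nat.ltb_lt]%filter_In; [lia|].
    rewrite Forall_forall in Hjs. specialize (Hjs _ Hj).
    pose proof (hinc j ltac:(lia)). pose proof (hgap j ltac:(lia)).
    rewrite Nat.add_1_r in *. cbn. lia.
  - exists w. split; [exact Hw|]. rewrite filter_andb in Hcw. unfold down_step. lia.
Qed.

Lemma exchange_preserves_sum v w U D R :
  Forall (fun i => a (S i) = a i + v) U -> Forall (fun j => a (pred j) = a j - w) D ->
  Z.of_nat (length U) = w -> Z.of_nat (length D) = v ->
  zsum (map a (map S U ++ map pred D ++ R)) = zsum (map a (U ++ D ++ R)).
Proof.
  intros HU HD HlU HlD. rewrite !map_app, !zsum_app, !map_map.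
  rewrite (zsum_map_shift (fun i => a (S i)) a v U),
    (zsum_map_shift (fun j => a (pred j)) a (- w) D).
  - rewrite HlU, HlD. lia.
  - eapply Forall_impl; [|exact HD]. cbv beta. lia.
  - exact HU.
Qed.

Lemma exchange_decreases_energy m v w U D R :
  0 < v -> 0 < w ->
  Forall (fun i => (i < m < l)%nat /\ a (S i) = a i + v) U ->
  Forall (fun j => (m < j < l)%nat /\ a (pred j) = a j - w) D ->
  Z.of_nat (length U) = w -> Z.of_nat (length D) = v ->
  energy (map S U ++ map pred D ++ R) < energy (U ++ D ++ R).
Proof.
  intros Hv Hw HU HD HlU HlD. unfold energy. rewrite !map_app, !zsum_app, !map_map.
  assert (EU : zsum (map (fun i => a (S i) * a (S i)) U)
               <= zsum (map (fun i => a i * a i) U) + w * (v * (2 * a m - v))).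
  { rewrite <- HlU. apply zsum_map_shift_le. eapply Forall_impl; [|exact HU].
    intros i [Him Hi]. exact (square_step_up m v i Him Hi). }
  assert (ED : zsum (map (fun j => a (pred j) * a (pred j)) D)
               <= zsum (map (fun j => a j * a j) D) + v * (- w * (2 * a m + w))).
  { rewrite <- HlD. apply zsum_map_shift_le. eapply Forall_impl; [|exact HD].
    intros j [Hmj Hj]. pose proof (square_step_down m w j Hmj Hj). lia. }
  assert (0 < v * w * (v + w)) by (apply Z.mul_pos_pos; [apply Z.mul_pos_pos|]; lia).
  nia.
Qed.

Lemma exchange_step js m :
  Forall (fun i => (i < l)%nat) js -> (m < l)%nat ->
  (b * (b - 1) < nbelow m js)%nat -> (b * (b - 1) < nabove m js)%nat ->
  exists js', Forall (fun i => (i < l)%nat) js' /\ length js' = length js /\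
    zsum (map a js') = zsum (map a js) /\ energy js' < energy js.
Proof.
  intros Hjs Hm Hbelow Habove.
  destruct (equal_gaps_below js m Hm Hbelow) as [v [Hv Hcv]].
  destruct (equal_gaps_above js m Hjs Habove) as [w [Hw Hcw]].
  destruct (select_disjoint_filters (up_step m v) (down_step m w) (Z.to_nat w) (Z.to_nat v) js)
    as [U [D [R [HP [HlU [HlD [HU HD]]]]]]]; [|lia|lia|].
  { unfold up_step, down_step. intros i [Him%Nat.ltb_lt _]%andb_prop.
    apply Bool.andb_false_intro1, Nat.ltb_ge. lia. }
  assert (Hrange : Forall (fun i => (i < l)%nat) (U ++ D ++ R))
    by (eapply Permutation_Forall; eassumption).
  apply Forall_app in Hrange as [HrU [HrD HrR]%Forall_app].
  assert (HU' : Forall (fun i => (i < m < l)%nat /\ a (S i) = a i + v) U).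
  { unfold up_step in HU. rewrite Forall_forall in *. intros i Hi.
    specialize (HU i Hi) as [Him%Nat.ltb_lt Hgap%Z.eqb_eq]%andb_prop. split; lia. }
  assert (HD' : Forall (fun j => (m < j < l)%nat /\ a (pred j) = a j - w) D).
  { unfold down_step in HD. rewrite Forall_forall in *. intros j Hj. specialize (HrD j Hj).
    specialize (HD j Hj) as [Hmj%Nat.ltb_lt Hgap%Z.eqb_eq]%andb_prop. split; lia. }
  exists (map S U ++ map pred D ++ R). repeat split.
  - rewrite !Forall_app, !Forall_map. repeat split; auto.
    + eapply Forall_impl; [|exact HU']. cbv beta. lia.
    + eapply Forall_impl; [|exact HD']. cbv beta. lia.
  - rewrite (Permutation_length HP), !length_app, !length_map. reflexivity.
  - rewrite (zsum_perm _ _ (Permutation_map a HP)).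
    apply (exchange_preserves_sum v w); try lia.
    + eapply Forall_impl; [|exact HU']. cbv beta. tauto.
    + eapply Forall_impl; [|exact HD']. cbv beta. tauto.
  - unfold energy at 2. rewrite (zsum_perm _ _ (Permutation_map _ HP)).
    fold (energy (U ++ D ++ R)).
    apply (exchange_decreases_energy m v w); auto; lia.
Qed.

Lemma balanced_representation js :
  Forall (fun i => (i < l)%nat) js ->
  exists ys, Forall (fun i => (i < l)%nat) ys /\ length ys = length js /\
    zsum (map a ys) = zsum (map a js) /\ balanced l (b * (b - 1)) ys.
Proof.
  induction js as [js IH] using (induction_ltof1 _ (fun js => Z.to_nat (energy js))).
  intros Hjs.
  destruct (classic (balanced l (b * (b - 1)) js)) as [Hbal|Hunbal]; [exists js; auto|].
  apply not_all_ex_not in Hunbal as [m Hm].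
  apply imply_to_and in Hm as [Hml Hm]. apply not_or_and in Hm as [Hbelow Habove].
  destruct (exchange_step js m Hjs Hml ltac:(lia) ltac:(lia))
    as [js' [Hjs' [Hlen [Hsum Henergy]]]].
  destruct (IH js') as [ys [Hys [Hlen' [Hsum' Hbal]]]]; [|exact Hjs'|].
  - unfold ltof. pose proof (energy_nonneg js'). lia.
  - exists ys. repeat split; [exact Hys|congruence|congruence|exact Hbal].
Qed.

End Descent.

Theorem mainTheorem2 (b : nat) (l : nat) (a : nat -> Z)
  (hb : (1 <= b)%nat) (hl : (2 <= l)%nat)
  (hinc : forall i, (i + 1 < l)%nat -> a i < a (i + 1)%nat)
  (hgap : forall i, (i + 1 < l)%nat -> a (i + 1)%nat - a i <= Z.of_nat b)
  (n : nat) (hn : (2 * b * b < n)%nat) :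
  forall z : Z,
    nfold n (setOf l a) z <->
    exists k, (k + 1 < l)%nat /\
      sumset (nfold (n - 2 * b * b)%nat (pair2 (a k) (a (k + 1)%nat)))
             (nfold (2 * b * b)%nat (setOf l a)) z.
Proof.
  intros z. split.
  - intros Hz. apply nfold_iff_zsum in Hz as [xs [Hlen [HA ->]]].
    destruct (Forall_setOf_map l a xs HA) as [js [Hjs ->]]. rewrite length_map in Hlen.
    destruct (balanced_representation l b a hinc hgap js Hjs)
      as [ys [Hys [Hlen' [Hsum Hbal]]]].
    destruct (balanced_window l (b * (b - 1)) ys hl Hys Hbal) as [k [Hk [Hbelow Habove]]].
    exists k. split; [exact Hk|].
    rewrite <- Hsum, <- Hlen, <- Hlen'. apply sumset_nfold_window; [exact Hys|lia|nia].
  - intros [k [Hk [x [y [Hx [Hy ->]]]]]].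
    replace n with (n - 2 * b * b + 2 * b * b)%nat by lia.
    apply sumset_nfold. exists x, y. repeat split; [|exact Hy].
    apply (nfold_mono (pair2 (a k) (a (k + 1)%nat))); [|exact Hx].
    intros w [-> | ->]; [exists k | exists (k + 1)%nat]; split; auto; lia.
Qed.
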